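(* Let $a$ be a function of two variables, and let $f,\tilde f,g,\tilde g,h,\tilde h$ be functions of two variables. Let $q(n_1,n_2;x)$, $(n_1,n_2)\in\mathbb Z^2$, be a function such that for every $x$ it satisfies the 7-point equation $$f(q,q_{1,0})-\tilde f(q,q_{-1,0})+g(q,q_{0,1})-\tilde g(q,q_{0,-1})+h(q,q_{-1,-1})-\tilde h(q,q_{1,1})=0$$ at every site, and such that at every site $$q_{,x}=a\bigl(q,\,f(q,q_{1,0})-\tilde g(q,q_{0,-1})-\tilde h(q,q_{1,1})\bigr)$$ (by the 7-point equation, equivalently $q_{,x}=a\bigl(q,\,\tilde f(q,q_{-1,0})-g(q,q_{0,1})-h(q,q_{-1,-1})\bigr)$). Fix an integer $j$. (i) The functions $q(k)=q(j,k)$, $p(k)=q(j+1,k)$ of $k\in\mathbb Z$ satisfy $$q_{,x}=a\bigl(q,f(q,p)-\tilde g(q,q_{-1})-\tilde h(q,p_1)\bigr),\qquad p_{,x}=a\bigl(p,\tilde f(p,q)-g(p,p_1)-h(p,q_{-1})\bigr).$$ (ii) The functions $q(k)=q(-k,j-k)$, $p(k)=q(1-k,j-k)$ of $k\in\mathbb Z$ satisfy $$q_{,x}=a\bigl(q,f(q,p)-\tilde g(q,p_1)-\tilde h(q,q_{-1})\bigr),\qquad p_{,x}=a\bigl(p,\tilde f(p,q)-g(p,q_{-1})-h(p,p_1)\bigr).$$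
   Context: Notation: $q_{i,j}=q(n_1+i,n_2+j)$ for the two-dimensional lattice function, and for one-index sequences $q_m=q(k+m)$, $p_m=p(k+m)$, with $q=q(k)$, $p=p(k)$. Subscript ${,x}$ denotes the derivative with respect to $x$. *)

From Stdlib Require Export Reals ZArith.
Open Scope R_scope.

Definition has_deriv (u : R -> R) (x v : R) : Prop := derivable_pt_lim u x v.

(** Along the lattice, the 7-point equation says exactly that the two expressions
    [f(q,q_{1,0}) - gt(q,q_{0,-1}) - ht(q,q_{1,1})] and
    [ft(q,q_{-1,0}) - g(q,q_{0,1}) - h(q,q_{-1,-1})] coincide, so every site evolves
    in x by either of two forms of the flow.  On the chain (i) the sites [q(j,k)] use the
    first form and the sites [q(j+1,k)] the second; on the diagonal chain (ii) the
    same holds for [q(-k,j-k)] and [q(1-k,j-k)].  In both cases the neighbours named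
    by the flow are, after re-indexing, exactly those named by the chain equations. *)
From Stdlib Require Import Lra.
Open Scope R_scope.
Set Implicit Arguments.
Unset Strict Implicit.

Section SevenPointFlow.

Variables a f ft g gt h ht : R -> R -> R.
Variable q : Z -> Z -> R -> R.

Hypothesis seven_point : forall (n1 n2 : Z) (x : R),
     f (q n1 n2 x) (q (n1 + 1)%Z n2 x) - ft (q n1 n2 x) (q (n1 - 1)%Z n2 x)
   + g (q n1 n2 x) (q n1 (n2 + 1)%Z x) - gt (q n1 n2 x) (q n1 (n2 - 1)%Z x)
   + h (q n1 n2 x) (q (n1 - 1)%Z (n2 - 1)%Z x) - ht (q n1 n2 x) (q (n1 + 1)%Z (n2 + 1)%Z x) = 0.

Hypothesis deriv_q : forall (n1 n2 : Z) (x : R),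
     has_deriv (q n1 n2) x
       (a (q n1 n2 x)
          (f (q n1 n2 x) (q (n1 + 1)%Z n2 x) - gt (q n1 n2 x) (q n1 (n2 - 1)%Z x)
           - ht (q n1 n2 x) (q (n1 + 1)%Z (n2 + 1)%Z x))).

Lemma deriv_q_backward (n1 n2 : Z) (x : R) :
  has_deriv (q n1 n2) x
    (a (q n1 n2 x)
       (ft (q n1 n2 x) (q (n1 - 1)%Z n2 x) - g (q n1 n2 x) (q n1 (n2 + 1)%Z x)
        - h (q n1 n2 x) (q (n1 - 1)%Z (n2 - 1)%Z x))).
Proof.
  assert (flows_agree :
    ft (q n1 n2 x) (q (n1 - 1)%Z n2 x) - g (q n1 n2 x) (q n1 (n2 + 1)%Z x)
      - h (q n1 n2 x) (q (n1 - 1)%Z (n2 - 1)%Z x)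
    = f (q n1 n2 x) (q (n1 + 1)%Z n2 x) - gt (q n1 n2 x) (q n1 (n2 - 1)%Z x)
      - ht (q n1 n2 x) (q (n1 + 1)%Z (n2 + 1)%Z x)).
  { pose proof (seven_point n1 n2 x); lra. }
  rewrite flows_agree; apply deriv_q.
Qed.

(** The neighbour values are abstracted so that a chain may name a lattice site by
    any index expression equal to the canonical one. *)
Lemma deriv_q_forward_at (n1 n2 : Z) (x qr qd qru : R) :
  qr = q (n1 + 1)%Z n2 x -> qd = q n1 (n2 - 1)%Z x -> qru = q (n1 + 1)%Z (n2 + 1)%Z x ->
  has_deriv (q n1 n2) x
    (a (q n1 n2 x) (f (q n1 n2 x) qr - gt (q n1 n2 x) qd - ht (q n1 n2 x) qru)).
Proof. intros -> -> ->; apply deriv_q. Qed.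

Lemma deriv_q_backward_at (n1 n2 : Z) (x ql qu qld : R) :
  ql = q (n1 - 1)%Z n2 x -> qu = q n1 (n2 + 1)%Z x -> qld = q (n1 - 1)%Z (n2 - 1)%Z x ->
  has_deriv (q n1 n2) x
    (a (q n1 n2 x) (ft (q n1 n2 x) ql - g (q n1 n2 x) qu - h (q n1 n2 x) qld)).
Proof. intros -> -> ->; apply deriv_q_backward. Qed.

End SevenPointFlow.

Theorem mainTheorem1
  (a f ft g gt h ht : R -> R -> R) (q : Z -> Z -> R -> R)
  (H7 : forall (n1 n2 : Z) (x : R),
     f (q n1 n2 x) (q (n1 + 1)%Z n2 x) - ft (q n1 n2 x) (q (n1 - 1)%Z n2 x)
   + g (q n1 n2 x) (q n1 (n2 + 1)%Z x) - gt (q n1 n2 x) (q n1 (n2 - 1)%Z x)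
   + h (q n1 n2 x) (q (n1 - 1)%Z (n2 - 1)%Z x) - ht (q n1 n2 x) (q (n1 + 1)%Z (n2 + 1)%Z x) = 0)
  (Hx : forall (n1 n2 : Z) (x : R),
     has_deriv (fun y => q n1 n2 y) x
       (a (q n1 n2 x)
          (f (q n1 n2 x) (q (n1 + 1)%Z n2 x) - gt (q n1 n2 x) (q n1 (n2 - 1)%Z x)
           - ht (q n1 n2 x) (q (n1 + 1)%Z (n2 + 1)%Z x))))
  (j : Z) :
  (* (i): q(k) = q(j,k), p(k) = q(j+1,k) *)
  (let qq := fun (k : Z) (x : R) => q j k x in
   let pp := fun (k : Z) (x : R) => q (j + 1)%Z k x in
   forall (k : Z) (x : R),
     has_deriv (qq k) x
       (a (qq k x) (f (qq k x) (pp k x) - gt (qq k x) (qq (k - 1)%Z x)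
                    - ht (qq k x) (pp (k + 1)%Z x)))
     /\ has_deriv (pp k) x
       (a (pp k x) (ft (pp k x) (qq k x) - g (pp k x) (pp (k + 1)%Z x)
                    - h (pp k x) (qq (k - 1)%Z x))))
  /\
  (* (ii): q(k) = q(-k, j-k), p(k) = q(1-k, j-k) *)
  (let qq := fun (k : Z) (x : R) => q (- k)%Z (j - k)%Z x in
   let pp := fun (k : Z) (x : R) => q (1 - k)%Z (j - k)%Z x in
   forall (k : Z) (x : R),
     has_deriv (qq k) x
       (a (qq k x) (f (qq k x) (pp k x) - gt (qq k x) (pp (k + 1)%Z x)
                    - ht (qq k x) (qq (k - 1)%Z x)))
     /\ has_deriv (pp k) x
       (a (pp k x) (ft (pp k x) (qq k x) - g (pp k x) (qq (k - 1)%Z x)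
                    - h (pp k x) (pp (k + 1)%Z x)))).
Proof.
  split; intros qq pp k x; unfold qq, pp; split.
  - apply (deriv_q_forward_at Hx); f_equal; ring.
  - apply (deriv_q_backward_at H7 Hx); f_equal; ring.
  - apply (deriv_q_forward_at Hx); f_equal; ring.
  - apply (deriv_q_backward_at H7 Hx); f_equal; ring.
Qed.
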